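(* Suppose $d$ is twice differentiable on its domain $\{(\beta,c):c^2<1,\beta<2\sqrt{1-c^2}\}$. Fix $k<2$ and consider the curve $\Gamma_k=\{(\beta,c):0\le c<1,\ \beta=k\sqrt{1-c^2}\}$. Then $d_{cc}$ changes sign at most once along $\Gamma_k$. That is, there do not exist $0\le c_1<c_2<c_3<1$ such that the values $d_{cc}(k\sqrt{1-c_i^2},c_i)$, $i=1,2,3$, are nonzero and alternate in sign.
   Context: Setting: $p>1$, $f\in C^2$ homogeneous of degree $p$ (i.e. $f(\lambda s)=\lambda^pf(s)$ for $\lambda>0$), and $F=\int_0^sf$, taking a positive value somewhere. Definitions: - $I(u)=\int u_{xx}^2-\beta u_x^2+(1-c^2)u^2$ and $K(u)=(p+1)\int F(u)$. - $m(\beta,c)=\inf\{I/K^{2/(p+1)}:u\in H^2,K(u)>0\}$. - $d(\beta,c)=\frac{p-1}{2(p+1)}m(\beta,c)^{(p+1)/(p-1)}$. - $d_{cc}=\partial_c^2d$. *)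

From Stdlib Require Import Reals Lra Classical ClassicalEpsilon.
Open Scope R_scope.

(* Improper integral over R of a function that is Riemann integrable on
   every symmetric interval and whose integral stabilises (used only for
   compactly supported continuous integrands). *)
Definition integralR (g : R -> R) (v : R) : Prop :=
  exists R0, forall a, R0 <= a ->
    exists pr : Riemann_integrable g (- a) a, RiemannInt pr = v.

(* u is C^2 with compact support, with first and second derivatives u1, u2.
   This is the dense class C_c^2(R) of H^2(R). *)
Definition admissible (u u1 u2 : R -> R) : Prop :=
  (forall x, derivable_pt_lim u x (u1 x)) /\
  (forall x, derivable_pt_lim u1 x (u2 x)) /\
  continuity u2 /\
  exists Rs, forall x, Rs < Rabs x -> u x = 0.

Definition Ival (beta c : R) (u u1 u2 : R -> R) (v : R) : Prop :=
  integralR (fun x => (u2 x)^2 - beta * (u1 x)^2 + (1 - c^2) * (u x)^2) v.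

Definition Kval (p : R) (F : R -> R) (u : R -> R) (v : R) : Prop :=
  integralR (fun x => (p + 1) * F (u x)) v.

Definition quot_set (p : R) (F : R -> R) (beta c : R) (q : R) : Prop :=
  exists u u1 u2 Iv Kv,
    admissible u u1 u2 /\ Ival beta c u u1 u2 Iv /\ Kval p F u Kv /\
    0 < Kv /\ q = Iv / Rpower Kv (2 / (p + 1)).

Definition is_lower_bound (E : R -> Prop) (m : R) : Prop :=
  forall x, E x -> m <= x.
Definition is_glb (E : R -> Prop) (m : R) : Prop :=
  is_lower_bound E m /\ (forall b, is_lower_bound E b -> b <= m).

(* infimum (chosen; unspecified if the glb does not exist) *)
Definition inf_of (E : R -> Prop) : R :=
  epsilon (inhabits 0) (fun m => is_glb E m).

Definition m_fun (p : R) (F : R -> R) (beta c : R) : R :=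
  inf_of (quot_set p F beta c).

Definition d_fun (p : R) (F : R -> R) (beta c : R) : R :=
  (p - 1) / (2 * (p + 1)) * Rpower (m_fun p F beta c) ((p + 1) / (p - 1)).

Definition dom (beta c : R) : Prop := c^2 < 1 /\ beta < 2 * sqrt (1 - c^2).

Definition frechet_at (g : R -> R -> R) (x y gx gy : R) : Prop :=
  forall eps, 0 < eps -> exists delta, 0 < delta /\
    forall h k, sqrt (h^2 + k^2) < delta ->
      Rabs (g (x + h) (y + k) - g x y - gx * h - gy * k)
        <= eps * sqrt (h^2 + k^2).

Definition diff_on_dom (g D1 D2 : R -> R -> R) : Prop :=
  forall beta c, dom beta c -> frechet_at g beta c (D1 beta c) (D2 beta c).

From Stdlib Require Import Reals.
From Coquelicot Require Import Coquelicot.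
From Stdlib Require Import Lra Psatz Classical ClassicalEpsilon FunctionalExtensionality PropExtensionality.
Open Scope R_scope.

(* Dilating a test function, u(x) |-> u(b x), multiplies int u_xx^2, int u_x^2,
   int u^2 and K(u) by b^3, b, 1/b and 1/b.  With b^4 = 1/(1 - c^2) this maps the
   quotients at (beta, c) onto b^s times those at (beta/sqrt(1 - c^2), 0), where
   s = 3 + 2/(p+1); hence d(beta, c) = (1 - c^2)^a d(beta/sqrt(1 - c^2), 0) for a
   fixed exponent a, unless d is constant.  The dichotomy holds because m(., 0),
   an infimum of affine functions of beta with nonpositive slopes, is nonnegative,
   nonincreasing and concave on beta < 2, so it vanishes nowhere or everywhere.
   On Gamma_k the rescaled argument beta/sqrt(1 - c^2) is the constant k, so two
   c-derivatives give d_cc = (1 - c^2)^(a-2) (P + Q c^2) for constants P, Q, and an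
   affine function of c^2 changes sign at most once. *)

(** * Integrals over R of compactly supported functions *)

Lemma integralR_is_RInt g v :
  integralR g v <-> exists R0, forall a, R0 <= a -> is_RInt g (- a) a v.
Proof.
split; intros [R0 H]; exists R0; intros a Ha.
- destruct (H a Ha) as [pr <-].
  rewrite <- (RInt_Reals g (- a) a pr).
  exact (RInt_correct _ _ _ (ex_RInt_Reals_1 _ _ _ pr)).
- assert (E : ex_RInt g (- a) a) by (eexists; exact (H a Ha)).
  exists (ex_RInt_Reals_0 _ _ _ E). rewrite <- RInt_Reals.
  apply (is_RInt_unique (V := R_CompleteNormedModule)), H, Ha.
Qed.

Lemma integralR_unique g v v' : integralR g v -> integralR g v' -> v = v'.
Proof.
rewrite !integralR_is_RInt. intros [R0 H] [R1 H'].
specialize (H (Rmax R0 R1) (Rmax_l _ _)). specialize (H' (Rmax R0 R1) (Rmax_r _ _)).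
apply (is_RInt_unique (V := R_CompleteNormedModule)) in H, H'. congruence.
Qed.

Lemma integralR_ext g1 g2 v : (forall x, g1 x = g2 x) -> integralR g1 v -> integralR g2 v.
Proof. intros E. now replace g2 with g1 by (apply functional_extensionality; exact E). Qed.

Lemma integralR_lin g1 g2 v1 v2 l1 l2 : integralR g1 v1 -> integralR g2 v2 ->
  integralR (fun x => l1 * g1 x + l2 * g2 x) (l1 * v1 + l2 * v2).
Proof.
rewrite !integralR_is_RInt. intros [R0 H] [R1 H']. exists (Rmax R0 R1). intros a Ha.
specialize (H a (Rle_trans _ _ _ (Rmax_l _ _) Ha)).
specialize (H' a (Rle_trans _ _ _ (Rmax_r _ _) Ha)).
exact (is_RInt_plus _ _ _ _ _ _ (is_RInt_scal _ _ _ l1 _ H) (is_RInt_scal _ _ _ l2 _ H')).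
Qed.

Lemma integralR_scal g v l : integralR g v -> integralR (fun x => l * g x) (l * v).
Proof.
intros H. replace (l * v) with (l * v + 0 * v) by ring.
apply (integralR_ext (fun x => l * g x + 0 * g x)); [intros x; ring |].
exact (integralR_lin _ _ _ _ l 0 H H).
Qed.

Lemma integralR_ge0 g v : (forall x, 0 <= g x) -> integralR g v -> 0 <= v.
Proof.
rewrite integralR_is_RInt. intros Hg [R0 H].
apply (is_RInt_ge_0 g (- Rmax R0 0) (Rmax R0 0)).
- pose proof (Rmax_r R0 0). lra.
- apply H, Rmax_l.
- intros x _. apply Hg.
Qed.

Lemma integralR_dilate g v b : 0 < b -> integralR g v -> integralR (fun x => g (b * x)) (v / b).
Proof.
rewrite !integralR_is_RInt. intros Hb [R0 H]. exists (R0 / b). intros a Ha.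
assert (Hba : R0 <= b * a).
{ apply (Rmult_le_compat_l b) in Ha; [| lra].
  replace (b * (R0 / b)) with R0 in Ha by (field; lra). exact Ha. }
specialize (H _ Hba).
replace (- (b * a)) with (b * - a + 0) in H by ring.
replace (b * a) with (b * a + 0) in H by ring.
apply is_RInt_comp_lin, (is_RInt_scal _ _ _ (/ b)) in H.
replace (v / b) with (scal (/ b) v) by (unfold scal; simpl; unfold mult; simpl; field; lra).
apply (is_RInt_ext _ _ _ _ _ (fun x _ => eq_refl)) in H.
eapply is_RInt_ext; [| exact H]. intros x _.
unfold scal; simpl; unfold mult; simpl. rewrite Rplus_0_r. field. lra.
Qed.

Lemma is_RInt_vanishing g a b : a <= b -> (forall x, a < x < b -> g x = 0) -> is_RInt g a b 0.
Proof.
intros Hab Hz.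
assert (H := is_RInt_const (V := R_NormedModule) a b 0).
unfold scal in H; simpl in H; unfold mult in H; simpl in H. rewrite Rmult_0_r in H.
eapply is_RInt_ext; [| exact H]. intros x Hx.
rewrite Rmin_left, Rmax_right in Hx by lra. symmetry. apply Hz, Hx.
Qed.

Lemma integralR_compact_support (g : R -> R) Rs :
  (forall x, continuous g x) -> (forall x, Rs < Rabs x -> g x = 0) -> exists v, integralR g v.
Proof.
intros Hc Hz. set (S := Rabs Rs + 1).
assert (HS : Rs < S) by (unfold S; pose proof (Rle_abs Rs); lra).
assert (HS0 : 0 < S) by (unfold S; pose proof (Rabs_pos Rs); lra).
assert (E : ex_RInt g (- S) S) by (apply (ex_RInt_continuous (V := R_CompleteNormedModule)); intros; apply Hc).
exists (RInt g (- S) S). rewrite integralR_is_RInt. exists S. intros a Ha.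
assert (Hl : is_RInt g (- a) (- S) 0).
{ apply is_RInt_vanishing; [lra |]. intros x Hx. apply Hz. rewrite Rabs_left; lra. }
assert (Hr : is_RInt g S a 0).
{ apply is_RInt_vanishing; [lra |]. intros x Hx. apply Hz. rewrite Rabs_right; lra. }
replace (RInt g (- S) S) with (plus (plus 0 (RInt g (- S) S)) 0)
  by (unfold plus; simpl; ring).
exact (is_RInt_Chasles _ _ _ _ _ _ (is_RInt_Chasles _ _ _ _ _ _ Hl (RInt_correct (V := R_CompleteNormedModule) _ _ _ E)) Hr).
Qed.

Lemma integralR_derive_compact_support (h h' : R -> R) Rs :
  (forall x, is_derive h x (h' x)) -> (forall x, continuous h' x) ->
  (forall x, Rs < Rabs x -> h x = 0) -> integralR h' 0.
Proof.
intros Hd Hc Hz. rewrite integralR_is_RInt. exists (Rabs Rs + 1). intros a Ha.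
pose proof (Rle_abs Rs). pose proof (Rabs_pos Rs).
assert (HI := is_RInt_derive (V := R_CompleteNormedModule) h h' (- a) a (fun x _ => Hd x) (fun x _ => Hc x)).
rewrite (Hz a), (Hz (- a)) in HI.
- unfold minus, plus, opp in HI; simpl in HI. now rewrite Ropp_0, Rplus_0_r in HI.
- rewrite Rabs_Ropp, Rabs_right; lra.
- rewrite Rabs_right; lra.
Qed.

Lemma continuous_Rmult (f g : R -> R) x :
  continuous f x -> continuous g x -> continuous (fun y => f y * g y) x.
Proof. exact (continuous_mult (K := R_AbsRing) f g x). Qed.

Lemma continuous_sqr (f : R -> R) x : continuous f x -> continuous (fun y => f y ^ 2) x.
Proof.
intros H. refine (continuous_ext (fun y => f y * f y) _ x _ (continuous_Rmult _ _ _ H H)).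
intros y; simpl; ring.
Qed.

Lemma locally_pos_of_continuous (f : R -> R) x :
  continuous f x -> 0 < f x -> locally x (fun y => 0 < f y).
Proof. intros Hc Hpos. exact (Hc _ (open_gt 0 (f x) Hpos)). Qed.

Lemma is_derive_vanishing_outside (u u' : R -> R) Rs :
  (forall x, is_derive u x (u' x)) -> (forall x, Rs < Rabs x -> u x = 0) ->
  forall x, Rs < Rabs x -> u' x = 0.
Proof.
intros Hd Hz x Hx.
assert (Hloc : locally x (fun y => u y = 0)).
{ apply (filter_imp (fun y => 0 < Rabs y - Rs)); [intros y Hy; apply Hz; lra |].
  apply locally_pos_of_continuous; [| lra].
  refine (continuous_ext (fun y => Rabs y + - Rs) _ x _ _); [intros y; simpl; ring |].
  apply (continuous_plus (V := R_NormedModule)); [apply continuous_Rabs | apply continuous_const]. }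
rewrite <- (is_derive_unique _ _ _ (Hd x)).
apply is_derive_unique, (is_derive_ext_loc (fun _ => 0)).
- apply (filter_imp _ _ (fun y Hy => eq_sym Hy) Hloc).
- apply is_derive_Reals, derivable_pt_lim_const.
Qed.

Lemma admissible_regular u u1 u2 : admissible u u1 u2 ->
  (forall x, continuous u x /\ continuous u1 x /\ continuous u2 x) /\
  exists Rs, forall x, Rs < Rabs x -> u x = 0 /\ u1 x = 0 /\ u2 x = 0.
Proof.
intros [Hu [Hu1 [Hu2 [Rs Hz]]]].
assert (Du : forall x, is_derive u x (u1 x)) by (intros; apply is_derive_Reals, Hu).
assert (Du1 : forall x, is_derive u1 x (u2 x)) by (intros; apply is_derive_Reals, Hu1).
split.
- intros x. repeat split.
  + exact (ex_derive_continuous u x (ex_intro _ _ (Du x))).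
  + exact (ex_derive_continuous u1 x (ex_intro _ _ (Du1 x))).
  + apply continuity_pt_filterlim, Hu2.
- exists Rs. intros x Hx.
  assert (Z1 := is_derive_vanishing_outside u u1 Rs Du Hz).
  repeat split; auto.
  exact (is_derive_vanishing_outside u1 u2 Rs Du1 Z1 x Hx).
Qed.

(** * Dilation of test functions *)

Definition energies (p : R) (F : R -> R) (A B C K : R) : Prop :=
  exists u u1 u2, admissible u u1 u2 /\
    integralR (fun x => u2 x ^ 2) A /\ integralR (fun x => u1 x ^ 2) B /\
    integralR (fun x => u x ^ 2) C /\ Kval p F u K.

Lemma admissible_square_integrals u u1 u2 : admissible u u1 u2 -> exists A B C,
  integralR (fun x => u2 x ^ 2) A /\ integralR (fun x => u1 x ^ 2) B /\
  integralR (fun x => u x ^ 2) C.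
Proof.
intros Ha. destruct (admissible_regular _ _ _ Ha) as [Hc [Rs Hz]].
destruct (integralR_compact_support (fun x => u2 x ^ 2) Rs) as [A HA].
{ intros x; apply continuous_sqr, Hc. }
{ intros x Hx. destruct (Hz x Hx) as [_ [_ ->]]. ring. }
destruct (integralR_compact_support (fun x => u1 x ^ 2) Rs) as [B HB].
{ intros x; apply continuous_sqr, Hc. }
{ intros x Hx. destruct (Hz x Hx) as [_ [-> _]]. ring. }
destruct (integralR_compact_support (fun x => u x ^ 2) Rs) as [C HC].
{ intros x; apply continuous_sqr, Hc. }
{ intros x Hx. destruct (Hz x Hx) as [-> _]. ring. }
now exists A, B, C.
Qed.

Lemma Ival_square_integrals beta c u u1 u2 A B C :
  integralR (fun x => u2 x ^ 2) A -> integralR (fun x => u1 x ^ 2) B ->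
  integralR (fun x => u x ^ 2) C -> Ival beta c u u1 u2 (A - beta * B + (1 - c^2) * C).
Proof.
intros HA HB HC.
replace (A - beta * B + (1 - c^2) * C) with (1 * (1 * A + - beta * B) + (1 - c^2) * C) by ring.
eapply integralR_ext; [| exact (integralR_lin _ _ _ _ 1 _ (integralR_lin _ _ _ _ 1 (- beta) HA HB) HC)].
intros x; simpl; ring.
Qed.

(* Integrating (u u')' = u'^2 + u u'' gives int u u'' = - int u'^2, and then
   0 <= int (u'' + u)^2 = A - 2 B + C. *)
Lemma admissible_interpolation u u1 u2 A B C : admissible u u1 u2 ->
  integralR (fun x => u2 x ^ 2) A -> integralR (fun x => u1 x ^ 2) B ->
  integralR (fun x => u x ^ 2) C -> 2 * B <= A + C.
Proof.
intros Ha HA HB HC.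
destruct (admissible_regular _ _ _ Ha) as [Hc [Rs Hz]].
destruct Ha as [Du [Du1 _]].
destruct (integralR_compact_support (fun x => u x * u2 x) Rs) as [D HD].
{ intros x; apply continuous_Rmult; apply Hc. }
{ intros x Hx. destruct (Hz x Hx) as [-> _]. ring. }
assert (H0 : integralR (fun x => u1 x * u1 x + u x * u2 x) 0).
{ apply (integralR_derive_compact_support (fun x => u x * u1 x) _ Rs).
  - intros x. apply is_derive_Reals.
    eapply derivable_pt_lim_ext; [| exact (derivable_pt_lim_mult u u1 x _ _ (Du x) (Du1 x))].
    reflexivity.
  - intros x. apply (continuous_plus (V := R_NormedModule)); apply continuous_Rmult; apply Hc.
  - intros x Hx. destruct (Hz x Hx) as [-> _]. ring. }
assert (HBD : B + D = 0).
{ apply (integralR_unique (fun x => u1 x * u1 x + u x * u2 x)); [| exact H0].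
  replace (B + D) with (1 * B + 1 * D) by ring.
  eapply integralR_ext; [| exact (integralR_lin _ _ _ _ 1 1 HB HD)]. intros x; simpl; ring. }
assert (Hsq : 0 <= 1 * (1 * A + 2 * D) + 1 * C).
{ eapply integralR_ge0; [| exact (integralR_lin _ _ _ _ 1 1 (integralR_lin _ _ _ _ 1 2 HA HD) HC)].
  intros x. simpl.
  replace (1 * (1 * (u2 x * (u2 x * 1)) + 2 * (u x * u2 x)) + 1 * (u x * (u x * 1)))
    with ((u2 x + u x) ^ 2) by ring.
  apply pow2_ge_0. }
lra.
Qed.

Lemma energies_interpolation p F A B C K : energies p F A B C K -> 0 <= B /\ 2 * B <= A + C.
Proof.
intros [u [u1 [u2 [Ha [HA [HB [HC _]]]]]]]. split.
- exact (integralR_ge0 _ _ (fun x => pow2_ge_0 _) HB).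
- exact (admissible_interpolation _ _ _ _ _ _ Ha HA HB HC).
Qed.

Lemma is_derive_dilate (f : R -> R) b x l :
  is_derive f (b * x) l -> is_derive (fun y => f (b * y)) x (b * l).
Proof.
intros H. apply (is_derive_comp (V := R_NormedModule) f (fun y => b * y) x l b H).
auto_derive; [exact I | ring].
Qed.

Lemma energies_dilate p F A B C K b : 0 < b ->
  energies p F A B C K -> energies p F (b^3 * A) (b * B) (C / b) (K / b).
Proof.
intros Hb [u [u1 [u2 [[Du [Du1 [Cu2 [Rs Hz]]]] [HA [HB [HC HK]]]]]]].
exists (fun x => u (b * x)), (fun x => b * u1 (b * x)), (fun x => b^2 * u2 (b * x)).
repeat split.
- intros x. apply is_derive_Reals, is_derive_dilate, is_derive_Reals, Du.
- intros x. apply is_derive_Reals.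
  replace (b^2 * u2 (b * x)) with (b * (b * u2 (b * x))) by ring.
  apply is_derive_scal, is_derive_dilate, is_derive_Reals, Du1.
- intros x. apply continuity_pt_filterlim.
  apply (continuous_Rmult (fun _ => b^2) (fun y => u2 (b * y))); [apply continuous_const |].
  apply (continuous_comp (fun y => b * y) u2).
  + apply (continuous_Rmult (fun _ => b) (fun y => y)); [apply continuous_const | apply continuous_id].
  + apply continuity_pt_filterlim, Cu2.
- exists (Rs / b). intros x Hx. apply Hz.
  rewrite Rabs_mult, (Rabs_right b) by lra.
  apply (Rmult_lt_compat_l b) in Hx; [| lra].
  now replace (b * (Rs / b)) with Rs in Hx by (field; lra).
- replace (b^3 * A) with (b^4 * (A / b)) by (field; lra).
  eapply integralR_ext; [| exact (integralR_scal _ _ (b^4) (integralR_dilate _ _ b Hb HA))].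
  intros x; simpl; ring.
- replace (b * B) with (b^2 * (B / b)) by (field; lra).
  eapply integralR_ext; [| exact (integralR_scal _ _ (b^2) (integralR_dilate _ _ b Hb HB))].
  intros x; simpl; ring.
- exact (integralR_dilate _ _ b Hb HC).
- exact (integralR_dilate _ _ b Hb HK).
Qed.

Definition rayleigh (p beta W A B C K : R) : R :=
  (A - beta * B + W * C) / Rpower K (2 / (p + 1)).

Definition rayleigh_set (p : R) (F : R -> R) (beta W q : R) : Prop :=
  exists A B C K, energies p F A B C K /\ 0 < K /\ q = rayleigh p beta W A B C K.

Lemma quot_set_rayleigh_set p F beta c q :
  quot_set p F beta c q <-> rayleigh_set p F beta (1 - c^2) q.
Proof.
split.
- intros [u [u1 [u2 [Iv [K [Ha [HI [HK [HK0 ->]]]]]]]]].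
  destruct (admissible_square_integrals _ _ _ Ha) as [A [B [C [HA [HB HC]]]]].
  exists A, B, C, K. split; [now exists u, u1, u2 |]. split; [exact HK0 |].
  unfold rayleigh. f_equal.
  exact (integralR_unique _ _ _ HI (Ival_square_integrals beta c _ _ _ _ _ _ HA HB HC)).
- intros [A [B [C [K [[u [u1 [u2 [Ha [HA [HB [HC HK]]]]]]] [HK0 ->]]]]]].
  exists u, u1, u2, (A - beta * B + (1 - c^2) * C), K.
  split; [exact Ha |]. split; [now apply Ival_square_integrals |]. auto.
Qed.

Lemma Rpower_div x y z : 0 < x -> 0 < y -> Rpower (x / y) z = Rpower x z / Rpower y z.
Proof.
intros Hx Hy. unfold Rpower. rewrite ln_div by assumption.
rewrite Rmult_minus_distr_l. unfold Rminus. rewrite exp_plus, exp_Ropp. reflexivity.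
Qed.

Lemma rayleigh_dilate p beta W A B C K b : 0 < b -> 0 < K ->
  rayleigh p (b^2 * beta) (b^4 * W) (b^3 * A) (b * B) (C / b) (K / b)
  = Rpower b (3 + 2 / (p + 1)) * rayleigh p beta W A B C K.
Proof.
intros Hb HK. unfold rayleigh.
assert (E3 : Rpower b 3 = b^3) by (rewrite <- Rpower_pow by lra; f_equal; simpl; ring).
assert (0 < Rpower b (2 / (p + 1))) by apply exp_pos.
assert (0 < Rpower K (2 / (p + 1))) by apply exp_pos.
rewrite Rpower_div, Rpower_plus, E3 by lra.
field. lra.
Qed.

Lemma rayleigh_set_dilate p F beta W q b : 0 < b -> rayleigh_set p F beta W q ->
  rayleigh_set p F (b^2 * beta) (b^4 * W) (Rpower b (3 + 2 / (p + 1)) * q).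
Proof.
intros Hb [A [B [C [K [HE [HK ->]]]]]].
exists (b^3 * A), (b * B), (C / b), (K / b). repeat split.
- now apply energies_dilate.
- apply Rdiv_lt_0_compat; assumption.
- symmetry. now apply rayleigh_dilate.
Qed.

Lemma rayleigh_set_dilate_iff p F beta W q b : 0 < b ->
  rayleigh_set p F beta W q <->
  rayleigh_set p F (b^2 * beta) (b^4 * W) (Rpower b (3 + 2 / (p + 1)) * q).
Proof.
intros Hb. split; [now apply rayleigh_set_dilate |].
intros H. assert (Hb' : 0 < / b) by (apply Rinv_0_lt_compat, Hb).
apply (rayleigh_set_dilate _ _ _ _ _ _ Hb') in H.
assert (Hinv : Rpower (/ b) (3 + 2 / (p + 1)) * Rpower b (3 + 2 / (p + 1)) = 1).
{ rewrite Rpower_mult_distr, Rinv_l by lra. unfold Rpower. now rewrite ln_1, Rmult_0_r, exp_0. }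
replace (Rpower (/ b) _ * (Rpower b _ * q)) with q in H by (rewrite <- Rmult_assoc, Hinv; ring).
replace ((/ b)^2 * (b^2 * beta)) with beta in H by (field; lra).
replace ((/ b)^4 * (b^4 * W)) with W in H by (field; lra).
exact H.
Qed.

Lemma inf_of_glb E m : is_glb E m -> inf_of E = m.
Proof.
intros Hm. assert (Hinf : is_glb E (inf_of E)).
{ apply (epsilon_spec (inhabits 0) (fun m => is_glb E m)). now exists m. }
apply Rle_antisym; [apply (proj2 Hm), Hinf | apply (proj2 Hinf), Hm].
Qed.

Lemma glb_of_nonneg (E : R -> Prop) :
  (exists x, E x) -> (forall x, E x -> 0 <= x) -> exists m, is_glb E m.
Proof.
intros [x0 Hx0] Hlb.
destruct (completeness (fun y => E (- y))) as [l [Hl1 Hl2]].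
- exists 0. intros y Hy. apply Hlb in Hy. lra.
- exists (- x0). now rewrite Ropp_involutive.
- exists (- l). split.
  + intros x Hx. enough (- x <= l) by lra. apply Hl1. now rewrite Ropp_involutive.
  + intros b Hb. enough (l <= - b) by lra. apply Hl2. intros y Hy. apply Hb in Hy. lra.
Qed.

Lemma is_glb_scale (E1 E2 : R -> Prop) mu m : 0 < mu ->
  (forall q, E1 q <-> E2 (mu * q)) -> is_glb E2 m -> is_glb E1 (m / mu).
Proof.
intros Hmu HE [Hlb Hgl]. split.
- intros x Hx. apply HE, Hlb in Hx.
  apply (Rmult_le_reg_l mu); [exact Hmu |]. now replace (mu * (m / mu)) with m by (field; lra).
- intros b Hb. assert (b * mu <= m).
  { apply Hgl. intros y Hy. replace y with (mu * (y / mu)) in Hy by (field; lra).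
    apply HE, Hb in Hy.
    apply (Rmult_le_reg_r (/ mu)); [now apply Rinv_0_lt_compat |].
    now replace (b * mu * / mu) with b by (field; lra). }
  apply (Rmult_le_reg_r mu); [exact Hmu |]. now replace (m / mu * mu) with m by (field; lra).
Qed.

(** * The function m on the axis c = 0 *)

Definition positive_K_exists (p : R) (F : R -> R) : Prop :=
  exists A B C K, energies p F A B C K /\ 0 < K.

Lemma quot_set_axis p F r q : quot_set p F r 0 q <-> rayleigh_set p F r 1 q.
Proof. rewrite quot_set_rayleigh_set. now replace (1 - 0^2) with 1 by ring. Qed.

Lemma rayleigh_axis_nonneg p r A B C K :
  r <= 2 -> 0 <= B -> 2 * B <= A + C -> 0 <= rayleigh p r 1 A B C K.
Proof.
intros Hr HB HABC. unfold rayleigh.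
apply Rdiv_le_0_compat; [nra | apply exp_pos].
Qed.

Lemma rayleigh_convex_beta p r r' t W A B C K :
  rayleigh p (t * r + (1 - t) * r') W A B C K
  = t * rayleigh p r W A B C K + (1 - t) * rayleigh p r' W A B C K.
Proof. unfold rayleigh. assert (0 < Rpower K (2 / (p + 1))) by apply exp_pos. field. lra. Qed.

Lemma rayleigh_antitone_beta p r r' A B C K : r <= r' -> 0 <= B ->
  rayleigh p r' 1 A B C K <= rayleigh p r 1 A B C K.
Proof.
intros Hr HB. unfold rayleigh, Rdiv. apply Rmult_le_compat_r.
- left. apply Rinv_0_lt_compat, exp_pos.
- nra.
Qed.

Section OnAxis.
Variables (p : R) (F : R -> R).
Hypothesis HK : positive_K_exists p F.

Let M r := m_fun p F r 0.

Lemma m_fun_axis_glb r : r < 2 -> is_glb (quot_set p F r 0) (M r) /\ 0 <= M r.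
Proof.
intros Hr.
assert (Hnonneg : forall q, quot_set p F r 0 q -> 0 <= q).
{ intros q Hq. apply quot_set_axis in Hq as [A [B [C [K [HE [_ ->]]]]]].
  destruct (energies_interpolation _ _ _ _ _ _ HE) as [HB HABC].
  apply rayleigh_axis_nonneg; auto; lra. }
destruct (glb_of_nonneg (quot_set p F r 0)) as [m Hm].
- destruct HK as [A [B [C [K [HE HK0]]]]].
  exists (rayleigh p r 1 A B C K). apply quot_set_axis. now exists A, B, C, K.
- exact Hnonneg.
- unfold M, m_fun. rewrite (inf_of_glb _ _ Hm). split; [exact Hm |].
  apply (proj2 Hm). exact Hnonneg.
Qed.

Lemma m_fun_axis_le_rayleigh r A B C K : r < 2 -> energies p F A B C K -> 0 < K ->
  M r <= rayleigh p r 1 A B C K.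
Proof.
intros Hr HE HK0. apply (proj1 (proj1 (m_fun_axis_glb r Hr))).
apply quot_set_axis. now exists A, B, C, K.
Qed.

Lemma m_fun_axis_antitone r r' : r <= r' -> r' < 2 -> M r' <= M r.
Proof.
intros Hrr' Hr'. apply (proj2 (proj1 (m_fun_axis_glb r ltac:(lra)))).
intros q Hq. apply quot_set_axis in Hq as [A [B [C [K [HE [HK0 ->]]]]]].
eapply Rle_trans; [apply (m_fun_axis_le_rayleigh r' A B C K); auto |].
apply rayleigh_antitone_beta; [exact Hrr' | apply (energies_interpolation _ _ _ _ _ _ HE)].
Qed.

Lemma m_fun_axis_concave r r' t : r < 2 -> r' < 2 -> 0 <= t <= 1 ->
  t * M r + (1 - t) * M r' <= M (t * r + (1 - t) * r').
Proof.
intros Hr Hr' Ht.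
assert (Hc : t * r + (1 - t) * r' < 2).
{ destruct (Rle_or_lt r r'); [apply Rle_lt_trans with r' | apply Rle_lt_trans with r]; nra. }
apply (proj2 (proj1 (m_fun_axis_glb _ Hc))).
intros q Hq. apply quot_set_axis in Hq as [A [B [C [K [HE [HK0 ->]]]]]].
rewrite rayleigh_convex_beta.
pose proof (m_fun_axis_le_rayleigh r A B C K Hr HE HK0).
pose proof (m_fun_axis_le_rayleigh r' A B C K Hr' HE HK0).
nra.
Qed.

End OnAxis.

Lemma concave_antitone_vanishing (M : R -> R) r0 :
  (forall r, r < 2 -> 0 <= M r) ->
  (forall r r', r <= r' -> r' < 2 -> M r' <= M r) ->
  (forall r r' t, r < 2 -> r' < 2 -> 0 <= t <= 1 ->
     t * M r + (1 - t) * M r' <= M (t * r + (1 - t) * r')) ->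
  r0 < 2 -> M r0 = 0 -> forall r, r < 2 -> M r = 0.
Proof.
intros Hpos Hanti Hconc Hr0 HM0 r Hr.
destruct (Rle_or_lt r0 r) as [Hle | Hlt].
- specialize (Hanti r0 r Hle Hr). specialize (Hpos r Hr). lra.
- (* r0 is a convex combination of r and r' := (r0 + 2) / 2 with weight t > 0 on r *)
  set (r' := (r0 + 2) / 2). set (t := (r' - r0) / (r' - r)).
  assert (Ht : 0 < t <= 1).
  { unfold t, r'. split; [apply Rdiv_lt_0_compat; lra |].
    apply Rmult_le_reg_r with ((r0 + 2) / 2 - r); [lra |]. field_simplify; lra. }
  assert (Hcomb : t * r + (1 - t) * r' = r0) by (unfold t, r'; field; lra).
  specialize (Hconc r r' t Hr ltac:(unfold r'; lra) ltac:(lra)).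
  rewrite Hcomb, HM0 in Hconc.
  pose proof (Hpos r Hr). pose proof (Hpos r' ltac:(unfold r'; lra)).
  nra.
Qed.

Lemma m_fun_axis_zero_or_pos p F : positive_K_exists p F ->
  (forall r, r < 2 -> m_fun p F r 0 = 0) \/ (forall r, r < 2 -> 0 < m_fun p F r 0).
Proof.
intros HK.
destruct (classic (exists r0, r0 < 2 /\ m_fun p F r0 0 = 0)) as [[r0 [Hr0 HM0]] | Hnz].
- left. apply (concave_antitone_vanishing (fun r => m_fun p F r 0) r0); auto.
  + intros r Hr. exact (proj2 (m_fun_axis_glb p F HK r Hr)).
  + exact (m_fun_axis_antitone p F HK).
  + exact (m_fun_axis_concave p F HK).
- right. intros r Hr. destruct (proj2 (m_fun_axis_glb p F HK r Hr)) as [Hlt | Heq]; [exact Hlt |].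
  exfalso. apply Hnz. now exists r.
Qed.

Definition weight (a c : R) : R := Rpower (1 - c^2) a.

Lemma weight_pos a c : 0 < weight a c.
Proof. apply exp_pos. Qed.

Lemma Rpower_pow_Rpower x y n : 0 < x -> Rpower x y ^ n = Rpower x (INR n * y).
Proof. intros Hx. rewrite <- Rpower_pow, Rpower_mult, Rmult_comm; [reflexivity | apply exp_pos]. Qed.

Lemma sqrt_mul_weight c : c^2 < 1 -> sqrt (1 - c^2) * weight (-(1/2)) c = 1.
Proof.
intros Hc. unfold weight. rewrite <- Rpower_sqrt, <- Rpower_plus by lra.
replace (/ 2 + - (1 / 2)) with 0 by field. apply Rpower_O. lra.
Qed.

Lemma dom_rescaled_lt_2 beta c : dom beta c -> beta * weight (-(1/2)) c < 2.
Proof.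
intros [Hc Hb]. apply Rlt_le_trans with (2 * sqrt (1 - c^2) * weight (-(1/2)) c).
- apply Rmult_lt_compat_r; [apply weight_pos | exact Hb].
- rewrite Rmult_assoc, sqrt_mul_weight by exact Hc. lra.
Qed.

Lemma m_fun_dilate p F beta c : positive_K_exists p F -> dom beta c ->
  m_fun p F beta c =
  m_fun p F (beta * weight (-(1/2)) c) 0 / weight (-(1/4) * (3 + 2 / (p + 1))) c.
Proof.
intros HK Hd. assert (Hc : 0 < 1 - c^2) by (destruct Hd; lra).
set (b := weight (-(1/4)) c).
assert (Hb : 0 < b) by apply weight_pos.
assert (Hb2 : b^2 = weight (-(1/2)) c).
{ unfold b, weight. rewrite Rpower_pow_Rpower by exact Hc. f_equal. simpl; field. }
assert (Hb4 : b^4 * (1 - c^2) = 1).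
{ unfold b, weight. rewrite Rpower_pow_Rpower by exact Hc.
  rewrite <- (Rpower_1 (1 - c^2)) at 2 by exact Hc.
  rewrite <- Rpower_plus. replace (INR 4 * - (1 / 4) + 1) with 0 by (simpl; field).
  apply Rpower_O, Hc. }
assert (Hbs : Rpower b (3 + 2 / (p + 1)) = weight (-(1/4) * (3 + 2 / (p + 1))) c)
  by (unfold b, weight; apply Rpower_mult).
unfold m_fun at 1. apply inf_of_glb.
rewrite <- Hbs. apply (is_glb_scale _ (quot_set p F (beta * weight (-(1/2)) c) 0)); [apply exp_pos | |].
- intros q. rewrite quot_set_rayleigh_set, quot_set_axis, (Rmult_comm beta).
  assert (E := rayleigh_set_dilate_iff p F beta (1 - c^2) q b Hb).
  now rewrite Hb4, Hb2 in E.
- exact (proj1 (m_fun_axis_glb p F HK _ (dom_rescaled_lt_2 _ _ Hd))).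
Qed.

Definition d_exponent (p : R) : R := (p + 1) / (p - 1) * (3 + 2 / (p + 1)) / 4.

Lemma d_fun_factorization p F : 1 < p ->
  (exists K0, forall beta c, dom beta c -> d_fun p F beta c = K0) \/
  (forall beta c, dom beta c ->
     d_fun p F beta c = weight (d_exponent p) c * d_fun p F (beta * weight (-(1/2)) c) 0).
Proof.
intros Hp.
destruct (classic (positive_K_exists p F)) as [HK | HnK].
2: { left. exists (d_fun p F 0 0). intros beta c _.
  assert (Hempty : forall beta c, quot_set p F beta c = fun _ => False).
  { intros b c'. apply functional_extensionality. intros q.
    apply propositional_extensionality. split; [| tauto].
    intros Hq. apply HnK. apply quot_set_rayleigh_set in Hq as [A [B [C [K [HE [HK0 _]]]]]].
    now exists A, B, C, K. }
  unfold d_fun, m_fun. now rewrite !Hempty. }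
destruct (m_fun_axis_zero_or_pos p F HK) as [Hzero | Hpos].
- left. exists ((p - 1) / (2 * (p + 1)) * Rpower 0 ((p + 1) / (p - 1))).
  intros beta c Hd. unfold d_fun.
  rewrite m_fun_dilate, Hzero by auto using dom_rescaled_lt_2.
  now rewrite Rdiv_0_l.
- right. intros beta c Hd. unfold d_fun.
  rewrite m_fun_dilate by auto.
  rewrite Rpower_div by auto using dom_rescaled_lt_2, weight_pos.
  unfold weight. rewrite Rpower_mult.
  replace (d_exponent p) with (- (- (1 / 4) * (3 + 2 / (p + 1)) * ((p + 1) / (p - 1))))
    by (unfold d_exponent; field; lra).
  rewrite (Rpower_Ropp (1 - c^2) (- (1 / 4) * _ * _)).
  assert (0 < Rpower (1 - c^2) (- (1 / 4) * (3 + 2 / (p + 1)) * ((p + 1) / (p - 1))))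
    by apply exp_pos.
  field. lra.
Qed.

(** * Second c-derivative along Gamma_k *)

Lemma frechet_at_swap g x y gx gy :
  frechet_at g x y gx gy -> frechet_at (fun a b => g b a) y x gy gx.
Proof.
intros H eps Heps. destruct (H eps Heps) as [d [Hd Hgd]]. exists d. split; [exact Hd |].
intros h k Hhk. rewrite Rplus_comm in Hhk. specialize (Hgd k h Hhk).
rewrite (Rplus_comm (k^2)) in Hgd. now replace (g (x + k) (y + h) - g x y - gy * h - gx * k)
  with (g (x + k) (y + h) - g x y - gx * k - gy * h) by ring.
Qed.

Lemma frechet_at_is_derive_2 g x y gx gy :
  frechet_at g x y gx gy -> is_derive (fun t => g x t) y gy.
Proof.
intros H. apply is_derive_Reals. intros eps Heps.
destruct (H (eps / 2) ltac:(lra)) as [d [Hd Hgd]].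
exists (mkposreal d Hd). intros h Hh0 Hhd. simpl in Hhd.
assert (Hnorm : sqrt (0^2 + h^2) = Rabs h)
  by (rewrite <- sqrt_Rsqr_abs; f_equal; unfold Rsqr; ring).
specialize (Hgd 0 h). rewrite Hnorm, Rplus_0_r in Hgd. specialize (Hgd Hhd).
replace ((g x (y + h) - g x y) / h - gy) with ((g x (y + h) - g x y - gx * 0 - gy * h) / h)
  by (field; exact Hh0).
unfold Rdiv. rewrite Rabs_mult, Rabs_inv.
apply Rle_lt_trans with (eps / 2 * Rabs h * / Rabs h).
- apply Rmult_le_compat_r; [left; apply Rinv_0_lt_compat, Rabs_pos_lt, Hh0 | exact Hgd].
- replace (eps / 2 * Rabs h * / Rabs h) with (eps / 2)
    by (field; apply Rabs_no_R0, Hh0).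
  lra.
Qed.

Lemma frechet_at_is_derive_1 g x y gx gy :
  frechet_at g x y gx gy -> is_derive (fun t => g t y) x gx.
Proof. intros H. exact (frechet_at_is_derive_2 _ _ _ _ _ (frechet_at_swap _ _ _ _ _ H)). Qed.

Lemma is_derive_eq_locally (f g : R -> R) x l l' :
  locally x (fun t => f t = g t) -> is_derive f x l -> is_derive g x l' -> l = l'.
Proof.
intros Hloc Hf Hg. apply (is_derive_ext_loc f g) in Hf; [| exact Hloc].
now rewrite <- (is_derive_unique _ _ _ Hf), <- (is_derive_unique _ _ _ Hg).
Qed.

Lemma dom_locally beta c : dom beta c -> locally c (fun t => dom beta t).
Proof.
intros [Hc Hb].
assert (H1 : locally c (fun t => 0 < 1 - t^2)).
{ apply (locally_pos_of_continuous (fun t => 1 - t^2)); [| lra].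
  apply (ex_derive_continuous (V := R_NormedModule)). auto_derive. exact I. }
assert (H2 : locally c (fun t => 0 < 2 * sqrt (1 - t^2) - beta)).
{ apply (locally_pos_of_continuous (fun t => 2 * sqrt (1 - t^2) - beta)); [| lra].
  apply (ex_derive_continuous (V := R_NormedModule)). auto_derive. lra. }
generalize (filter_and _ _ H1 H2). apply filter_imp. intros t [Ht1 Ht2]. split; lra.
Qed.

Lemma is_derive_weight a c : c^2 < 1 ->
  is_derive (weight a) c (weight a c * (-2 * a * c) / (1 - c^2)).
Proof. intros Hc. unfold weight, Rpower. auto_derive; [lra |].
replace (1 + - (c * (c * 1))) with (1 - c^2) by ring. field. lra.
Qed.

Lemma Derive_of_is_derive (f : R -> R) x l : is_derive f x l -> Derive f x = l.
Proof. exact (is_derive_unique f x l). Qed.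

Definition weighted_profile_dc (G G1 : R -> R) (a beta c : R) : R :=
  let r := beta * weight (-(1/2)) c in
  weight a c / (1 - c^2) * (-2 * a * c * G r + r * c * G1 r).

Lemma is_derive_weighted_profile (G G1 : R -> R) a beta c : c^2 < 1 ->
  is_derive G (beta * weight (-(1/2)) c) (G1 (beta * weight (-(1/2)) c)) ->
  is_derive (fun t => weight a t * G (beta * weight (-(1/2)) t)) c
    (weighted_profile_dc G G1 a beta c).
Proof.
intros Hc HG. auto_derive.
- repeat split.
  + exact (ex_intro _ _ (is_derive_weight a c Hc)).
  + exact (ex_intro _ _ HG).
  + exact (ex_intro _ _ (is_derive_weight _ c Hc)).
- rewrite (Derive_of_is_derive (fun x => weight a x) _ _ (is_derive_weight a c Hc)),
    (Derive_of_is_derive (fun x => weight _ x) _ _ (is_derive_weight _ c Hc)),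
    (Derive_of_is_derive (fun x => G x) _ _ HG).
  unfold weighted_profile_dc. simpl. field. lra.
Qed.

Lemma is_derive_weighted_profile_dc_on_curve (G G1 G2 : R -> R) (a k c : R) : c^2 < 1 ->
  is_derive G k (G1 k) -> is_derive G1 k (G2 k) ->
  is_derive (weighted_profile_dc G G1 a (k * sqrt (1 - c^2))) c
    (weight a c / (1 - c^2)^2 * ((-2 * a * G k + k * G1 k) +
       (2 * a * (2 * a - 1) * G k + 2 * (1 - 2 * a) * k * G1 k + k^2 * G2 k) * c^2)).
Proof.
intros Hc HG HG1.
set (w := sqrt (1 - c^2)).
assert (Hw : 0 < w) by (apply sqrt_lt_R0; lra).
assert (HE : weight (-(1/2)) c = / w).
{ assert (H := sqrt_mul_weight c Hc). fold w in H. field_simplify_eq; [| lra]. lra. }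
assert (Hk : k * w * weight (-(1/2)) c = k) by (rewrite HE; field; lra).
rewrite <- Hk in HG, HG1.
unfold weighted_profile_dc. auto_derive.
- repeat split; try lra;
    first [exact (ex_intro _ _ (is_derive_weight _ c Hc)) | exact (ex_intro _ _ HG)
          | exact (ex_intro _ _ HG1)].
- rewrite (Derive_of_is_derive (fun x => weight a x) _ _ (is_derive_weight a c Hc)),
    (Derive_of_is_derive (fun x => weight _ x) _ _ (is_derive_weight _ c Hc)),
    (Derive_of_is_derive (fun x => G x) _ _ HG), (Derive_of_is_derive (fun x => G1 x) _ _ HG1).
  rewrite Hk, HE. replace (1 + - (c * (c * 1))) with (1 - c^2) by ring.
  field. lra.
Qed.

Lemma dom_axis r : r < 2 -> dom r 0.
Proof. intros Hr. split; [lra |]. replace (1 - 0^2) with 1 by ring. rewrite sqrt_1. lra. Qed.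

Lemma dom_curve k c : k < 2 -> 0 <= c < 1 -> dom (k * sqrt (1 - c^2)) c.
Proof.
intros Hk Hc. assert (0 < sqrt (1 - c^2)) by (apply sqrt_lt_R0; nra).
split; nra.
Qed.

Section SecondPartial.
Variables phi D1 D2 D11 D12 D21 D22 : R -> R -> R.
Hypothesis Hphi : diff_on_dom phi D1 D2.
Hypothesis HD2 : diff_on_dom D2 D21 D22.

Lemma second_partial_of_constant K0 :
  (forall beta c, dom beta c -> phi beta c = K0) ->
  forall beta c, dom beta c -> D22 beta c = 0.
Proof.
intros Hconst.
assert (HD2z : forall beta c, dom beta c -> D2 beta c = 0).
{ intros beta c Hd. symmetry.
  apply (is_derive_eq_locally (fun _ => K0) (fun t => phi beta t) c).
  - apply (filter_imp _ _ (fun t Ht => eq_sym (Hconst beta t Ht)) (dom_locally _ _ Hd)).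
  - apply is_derive_Reals, derivable_pt_lim_const.
  - exact (frechet_at_is_derive_2 _ _ _ _ _ (Hphi beta c Hd)). }
intros beta c Hd. symmetry.
apply (is_derive_eq_locally (fun _ => 0) (fun t => D2 beta t) c).
- apply (filter_imp _ _ (fun t Ht => eq_sym (HD2z beta t Ht)) (dom_locally _ _ Hd)).
- apply is_derive_Reals, derivable_pt_lim_const.
- exact (frechet_at_is_derive_2 _ _ _ _ _ (HD2 beta c Hd)).
Qed.

Hypothesis HD1 : diff_on_dom D1 D11 D12.

Lemma second_partial_of_factorized a :
  (forall beta c, dom beta c -> phi beta c = weight a c * phi (beta * weight (-(1/2)) c) 0) ->
  forall k, k < 2 -> forall c, 0 <= c < 1 ->
  D22 (k * sqrt (1 - c^2)) c =
  weight a c / (1 - c^2)^2 * ((-2 * a * phi k 0 + k * D1 k 0) +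
    (2 * a * (2 * a - 1) * phi k 0 + 2 * (1 - 2 * a) * k * D1 k 0 + k^2 * D11 k 0) * c^2).
Proof.
intros Hfac k Hk c Hc.
set (G := fun r => phi r 0). set (G1 := fun r => D1 r 0).
assert (HG : forall r, r < 2 -> is_derive G r (G1 r))
  by (intros r Hr; exact (frechet_at_is_derive_1 _ _ _ _ _ (Hphi r 0 (dom_axis r Hr)))).
assert (HD2prof : forall beta c, dom beta c -> D2 beta c = weighted_profile_dc G G1 a beta c).
{ intros beta c' Hd.
  apply (is_derive_eq_locally (fun t => phi beta t)
           (fun t => weight a t * G (beta * weight (-(1/2)) t)) c').
  - apply (filter_imp _ _ (fun t Ht => Hfac beta t Ht) (dom_locally _ _ Hd)).
  - exact (frechet_at_is_derive_2 _ _ _ _ _ (Hphi beta c' Hd)).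
  - apply is_derive_weighted_profile; [destruct Hd; lra |].
    apply HG, dom_rescaled_lt_2, Hd. }
apply (is_derive_eq_locally (fun t => D2 (k * sqrt (1 - c^2)) t)
         (weighted_profile_dc G G1 a (k * sqrt (1 - c^2))) c).
- apply (filter_imp _ _ (fun t Ht => HD2prof _ t Ht) (dom_locally _ _ (dom_curve k c Hk Hc))).
- exact (frechet_at_is_derive_2 _ _ _ _ _ (HD2 _ c (dom_curve k c Hk Hc))).
- apply (is_derive_weighted_profile_dc_on_curve G G1 (fun r => D11 r 0)); [nra | apply HG, Hk |].
  exact (frechet_at_is_derive_1 _ _ _ _ _ (HD1 k 0 (dom_axis k Hk))).
Qed.

End SecondPartial.

Lemma d_fun_second_partial_on_curve p F D1 D2 D11 D12 D21 D22 k : 1 < p ->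
  diff_on_dom (d_fun p F) D1 D2 -> diff_on_dom D1 D11 D12 -> diff_on_dom D2 D21 D22 ->
  k < 2 -> exists a P Q, forall c, 0 <= c < 1 ->
  D22 (k * sqrt (1 - c^2)) c = weight a c / (1 - c^2)^2 * (P + Q * c^2).
Proof.
intros Hp Hd HD1 HD2 Hk.
destruct (d_fun_factorization p F Hp) as [[K0 Hconst] | Hfac].
- exists 0, 0, 0. intros c Hc.
  rewrite (second_partial_of_constant _ _ _ _ _ Hd HD2 K0 Hconst _ _ (dom_curve k c Hk Hc)).
  ring.
- eexists; eexists; eexists. intros c Hc.
  exact (second_partial_of_factorized _ _ _ _ _ _ _ Hd HD2 HD1 _ Hfac k Hk c Hc).
Qed.

Lemma affine_sign_changes_once P Q t1 t2 t3 : t1 < t2 -> t2 < t3 ->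
  (P + Q * t1) * (P + Q * t2) < 0 -> (P + Q * t2) * (P + Q * t3) < 0 -> False.
Proof.
intros H12 H23 S12 S23.
assert (E : (P + Q * t2)^2 * (t3 - t1)
            = (t3 - t2) * ((P + Q * t1) * (P + Q * t2)) + (t2 - t1) * ((P + Q * t2) * (P + Q * t3)))
  by ring.
assert (0 <= (P + Q * t2)^2 * (t3 - t1)) by (apply Rmult_le_pos; [apply pow2_ge_0 | lra]).
assert ((t3 - t2) * ((P + Q * t1) * (P + Q * t2)) < 0) by nra.
assert ((t2 - t1) * ((P + Q * t2) * (P + Q * t3)) < 0) by nra.
lra.
Qed.

Lemma Rmult_lt_0_cancel_pos w1 w2 x y : 0 < w1 -> 0 < w2 -> w1 * x * (w2 * y) < 0 -> x * y < 0.
Proof.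
intros H1 H2 H. replace (w1 * x * (w2 * y)) with ((w1 * w2) * (x * y)) in H by ring.
destruct (Rlt_or_le (x * y) 0) as [Hlt | Hge]; [exact Hlt |].
assert (0 < w1 * w2) by nra. nra.
Qed.

Theorem mainTheorem19 :
  forall (p : R) (f f1 f2 F : R -> R),
    1 < p ->
    (forall s, derivable_pt_lim f s (f1 s)) ->
    (forall s, derivable_pt_lim f1 s (f2 s)) ->
    continuity f2 ->
    (forall lam s, 0 < lam -> f (lam * s) = Rpower lam p * f s) ->
    F 0 = 0 ->
    (forall s, derivable_pt_lim F s (f s)) ->
    (exists s, 0 < F s) ->
    forall D1 D2 D11 D12 D21 D22 : R -> R -> R,
    diff_on_dom (d_fun p F) D1 D2 ->
    diff_on_dom D1 D11 D12 ->
    diff_on_dom D2 D21 D22 ->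
    forall k : R, k < 2 ->
    ~ (exists c1 c2 c3 : R,
         0 <= c1 /\ c1 < c2 /\ c2 < c3 /\ c3 < 1 /\
         D22 (k * sqrt (1 - c1^2)) c1 * D22 (k * sqrt (1 - c2^2)) c2 < 0 /\
         D22 (k * sqrt (1 - c2^2)) c2 * D22 (k * sqrt (1 - c3^2)) c3 < 0).
Proof.
intros p f f1 f2 F Hp _ _ _ _ _ _ _ D1 D2 D11 D12 D21 D22 Hd HD1 HD2 k Hk
  [c1 [c2 [c3 [H0 [H12 [H23 [H3 [S12 S23]]]]]]]].
destruct (d_fun_second_partial_on_curve p F D1 D2 D11 D12 D21 D22 k Hp Hd HD1 HD2 Hk)
  as [a [P [Q HD22]]].
rewrite !HD22 in S12, S23 by lra.
assert (Hw : forall c, 0 <= c < 1 -> 0 < weight a c / (1 - c^2)^2)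
  by (intros c Hc; apply Rdiv_lt_0_compat; [apply weight_pos | apply pow_lt; nra]).
apply (affine_sign_changes_once P Q (c1^2) (c2^2) (c3^2)); [nra | nra | |].
- exact (Rmult_lt_0_cancel_pos _ _ _ _ (Hw c1 ltac:(lra)) (Hw c2 ltac:(lra)) S12).
- exact (Rmult_lt_0_cancel_pos _ _ _ _ (Hw c2 ltac:(lra)) (Hw c3 ltac:(lra)) S23).
Qed.
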